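(* Let $R$ be a ranking profile over $m$ candidates and $\rhd$ the ranking chosen by the Proportional Sequential Borda rule for $R$. Then for every subprofile $S$ of $R$ with $|S|>0$, $$\frac{1}{|S|}\sum_{\succ\in\mathcal{R}}S(\succ)\,u(\succ,\rhd)\geq\binom{m}{2}\frac{|S|}{4}-\frac{3}{16}.$$
   Context: Let $C$ be a set of $m$ candidates. A ranking is a strict linear order over $C$; $\mathcal{R}$ denotes the set of all rankings over $C$. A ranking profile is a function $R:\mathcal{R}\to[0,1]$ with $\sum_{\succ}R(\succ)=1$. A subprofile of $R$ is a function $S:\mathcal{R}\to[0,1]$ with $S(\succ)\leq R(\succ)$ for all $\succ$; $|S|=\sum_{\succ}S(\succ)$. For rankings $\succ,\rhd$, $u(\succ,\rhd)=|\{(x,y)\in C^2: x\succ y\text{ and }x\rhd y\}|$; for $x\in X\subseteq C$, $u(\succ,x,X)=|\{y\in X\setminus\{x\}: x\succ y\}|$; for $b:\mathcal{R}\to\mathbb{R}_{\geq0}$, $U(b,x,X)=\sum_{\succ}b(\succ)u(\succ,x,X)$. Proportional Sequential Borda rule: set $X_1=C$, $b_1(\succ)=R(\succ)\binom{m}{2}$. For $i=1,\dots,m$: choose $x^*\in\arg\max_{x\in X_i}U(b_i,x,X_i)$ (ties broken arbitrarily), place $x^*$ at position $i$, set $X_{i+1}=X_i\setminus\{x^*\}$ and $b_{i+1}(\succ)=b_i(\succ)-\min\!\big(\frac{(m-i)u(\succ,x^*,X_i)b_i(\succ)}{U(b_i,x^*,X_i)},b_i(\succ)\big)$ (convention $0/0=0$).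 *)

From HB Require Import structures.
From mathcomp Require Import all_boot all_order all_algebra all_fingroup.
From mathcomp Require Import reals.
Set Implicit Arguments. Unset Strict Implicit. Unset Printing Implicit Defensive.
Import Order.TTheory GRing.Theory Num.Theory.
Local Open Scope ring_scope.

(* Candidates: C = 'I_m.  A ranking is a strict linear order on C, encoded by
   the bijection s : {perm 'I_m} mapping each candidate to its position
   (0 = top).  x is ranked above y in s iff s x < s y. *)
Definition prefers (m : nat) (s : {perm 'I_m}) (x y : 'I_m) : bool :=
  (s x < s y)%N.

Definition u_rank (m : nat) (s t : {perm 'I_m}) : nat :=
  #|[set p : 'I_m * 'I_m | prefers s p.1 p.2 && prefers t p.1 p.2]|.

Definition u_cand (m : nat) (s : {perm 'I_m}) (x : 'I_m) (X : {set 'I_m}) : nat :=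
  #|[set y in X | (y != x) && prefers s x y]|.

Definition U_score (R : realType) (m : nat) (b : {ffun {perm 'I_m} -> R})
  (x : 'I_m) (X : {set 'I_m}) : R :=
  \sum_(s : {perm 'I_m}) b s * (u_cand s x X)%:R.

(* Remaining candidates before step k (0-indexed): those placed at
   position >= k by the output ranking rhd. *)
Definition remaining (m : nat) (rhd : {perm 'I_m}) (k : nat) : {set 'I_m} :=
  [set x | (k <= rhd x)%N].

(* One budget update step (0-indexed step k, i.e. paper's step i = k+1, so
   the factor m - i is m - k - 1).  Division by 0 is 0 in MathComp. *)
Definition budget_step (R : realType) (m : nat) (k : nat)
  (b : {ffun {perm 'I_m} -> R}) (x : 'I_m) (X : {set 'I_m})
  : {ffun {perm 'I_m} -> R} :=
  [ffun s => b s - Num.min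
      ((m - k.+1)%:R * (u_cand s x X)%:R * b s / U_score b x X) (b s)].

(* Budgets b_k along the run of the rule which selects, at step k, the
   candidate placed at position k by rhd. *)
Fixpoint budget (R : realType) (m : nat) (Rp : {ffun {perm 'I_m} -> R})
  (rhd : {perm 'I_m}) (k : nat) : {ffun {perm 'I_m} -> R} :=
  match k with
  | 0 => [ffun s => Rp s * ('C(m, 2))%:R]
  | k'.+1 =>
      let b := budget Rp rhd k' in
      match [pick x | (rhd x == k' :> nat)] with
      | Some x => budget_step k' b x (remaining rhd k')
      | None => b
      end
  end.

(* rhd is a possible output of the Proportional Sequential Borda rule on Rp
   (for some tie-breaking): the candidate x placed at position k = rhd x
   maximizes U(b_k, ., X_k) over X_k. *)
Definition PSB_outcome (R : realType) (m : nat) (Rp : {ffun {perm 'I_m} -> R})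
  (rhd : {perm 'I_m}) : Prop :=
  forall x y : 'I_m,
    let k := nat_of_ord (rhd x) in
    y \in remaining rhd k ->
    U_score (budget Rp rhd k) y (remaining rhd k)
      <= U_score (budget Rp rhd k) x (remaining rhd k).

Definition is_profile (R : realType) (m : nat) (Rp : {ffun {perm 'I_m} -> R}) : Prop :=
  (forall s, 0 <= Rp s <= 1) /\ \sum_s Rp s = 1.

Definition is_subprofile (R : realType) (m : nat) (Rp S : {ffun {perm 'I_m} -> R}) : Prop :=
  forall s, 0 <= S s <= Rp s.

Definition mass (R : realType) (m : nat) (S : {ffun {perm 'I_m} -> R}) : R :=
  \sum_s S s.

From HB Require Import structures.
From mathcomp Require Import all_boot all_order all_algebra all_fingroup.
From mathcomp Require Import reals.
From mathcomp Require Import ring lra zify.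
Import Order.TTheory GRing.Theory Num.Theory.
Local Open Scope ring_scope.
Set Implicit Arguments.
Unset Strict Implicit.

(* Voters start with budget [C(m, 2)] per unit of weight; when the candidate at
   position k is placed, every voter pays towards it in proportion to the
   utility [u(s, x, X_k)] it gets from it.  The winner has at least the average
   score, so each step removes at least [min (m - k - 1) (B / 2)] of the total
   budget [B], and after [m] steps at most 3/4 is left.  For a subprofile of
   weight [w] with remaining budget [W_k], the same averaging shows
   [W_k (W_k - W_(k+1)) <= 2 C(m, 2)] times the utility the subprofile gets
   from the k-th candidate.  Summing and telescoping,
   [(W_0^2 - W_m^2) / 2 <= 2 C(m, 2) sum_s S(s) u(s, rhd)], where
   [W_0 = C(m, 2) |S|] and [W_m <= min (3/4) (C(m, 2) |S|)]. *)

Lemma card_set_sum (T : finType) (P : pred T) :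
  #|[set z | P z]| = (\sum_z P z)%N.
Proof. by rewrite -sum1dep_card big_mkcond; apply: eq_bigr => z _; case: (P z). Qed.

Lemma card_set_in_sum (T : finType) (A : {pred T}) (P : pred T) :
  #|[set z in A | P z]| = (\sum_(z in A) P z)%N.
Proof.
by rewrite card_set_sum [RHS]big_mkcond; apply: eq_bigr => z _; case: (z \in A).
Qed.

Lemma card_geq_ord (m k : nat) : #|[set i : 'I_m | (k <= i)%N]| = (m - k)%N.
Proof.
rewrite -sum1dep_card (eq_bigl (fun i : 'I_m => xpredT i && (k <= i)%N)) //.
by rewrite -(big_geq_mkord _ _ xpredT (fun=> 1%N)) sum_nat_const_nat muln1.
Qed.

Lemma sum_u_cand (m : nat) (s : {perm 'I_m}) (X : {set 'I_m}) :
  (2 * \sum_(y in X) u_cand s y X = #|X| * #|X|.-1)%N.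
Proof.
under eq_bigr do rewrite /u_cand card_set_in_sum.
(* Together with its swapped copy, the double sum counts each ordered pair of
   distinct elements of [X] exactly once. *)
rewrite mul2n -addnn {2}exchange_big -big_split -sum_nat_const /=.
apply: eq_bigr => y Xy; rewrite -big_split (bigD1 y Xy) /= eqxx /= add0n.
rewrite (cardsD1 y X) Xy /= -sum1_card; apply: eq_big => [z|z /andP[_ zy]].
  by rewrite !inE andbC.
rewrite zy eq_sym zy /prefers /=.
have : s z != s y by rewrite (inj_eq perm_inj).
by case: ltngtP => // /val_inj ->; rewrite eqxx.
Qed.

Lemma u_cand_le (m : nat) (s : {perm 'I_m}) (x : 'I_m) (X : {set 'I_m}) :
  x \in X -> (u_cand s x X <= #|X|.-1)%N.
Proof.
move=> Xx; rewrite /u_cand (cardsD1 x X) Xx /=.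
by apply/subset_leq_card/subsetP => y; rewrite !inE => /andP[-> /andP[-> _]].
Qed.

Lemma U_score_ge0 (R : realType) (m : nat) (b : {ffun {perm 'I_m} -> R})
    (x : 'I_m) (X : {set 'I_m}) :
  (forall s, 0 <= b s) -> 0 <= U_score b x X.
Proof. by move=> b_ge0; apply: sumr_ge0 => s _; rewrite mulr_ge0 ?ler0n. Qed.

Section BudgetStep.

Variables (R : realType) (m k : nat) (b : {ffun {perm 'I_m} -> R}).
Variables (x : 'I_m) (X : {set 'I_m}).
Hypothesis b_ge0 : forall s, 0 <= b s.

Local Notation j := (m - k.+1)%N.
Local Notation U := (U_score b x X).
Local Notation pay s := (Num.min (j%:R * (u_cand s x X)%:R * b s / U) (b s)).

Lemma budget_stepE s : budget_step k b x X s = b s - pay s.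
Proof. by rewrite ffunE. Qed.

Lemma pay_ge0 s : 0 <= pay s.
Proof. by rewrite le_min b_ge0 andbT divr_ge0 ?U_score_ge0 ?mulr_ge0 ?ler0n. Qed.

Lemma budget_step_ge0 s : 0 <= budget_step k b x X s.
Proof. by rewrite budget_stepE subr_ge0 ge_min lexx orbT. Qed.

Lemma budget_step_le s : budget_step k b x X s <= b s.
Proof. by rewrite budget_stepE gerBl pay_ge0. Qed.

Hypothesis card_X : #|X| = j.+1.
Hypothesis x_max : forall y, y \in X -> U_score b y X <= U.

(* Averaging [U_score b y X] over the [j + 1] candidates [y] of [X] gives
   [mass b * j / 2], and [x] scores at least the average. *)
Lemma mass_mulr_le_U_score : mass b * j%:R <= 2 * U.
Proof.
have sumU : \sum_(y in X) U_score b y X = mass b * (j.+1 * j)%:R / 2.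
  rewrite /U_score exchange_big /mass !mulr_suml; apply: eq_bigr => s _.
  rewrite -mulr_sumr -natr_sum -mulrA; congr (_ * _).
  have := sum_u_cand s X; rewrite card_X /= => <-.
  by rewrite natrM mulrC mulKf ?pnatr_eq0.
have : \sum_(y in X) U_score b y X <= #|X|%:R * U.
  by rewrite mulr_natl -sumr_const; apply: ler_sum.
rewrite sumU card_X natrM.
have : (0 : R) < j.+1%:R by rewrite ltr0n.
set J1 := j.+1%:R; set J := j%:R; nra.
Qed.

Hypothesis x_in : x \in X.

(* Since [u_cand s x X <= j], every voter pays at least a fixed fraction of
   its contribution [b s * u_cand s x X] to [U]. *)
Lemma share_le_pay s : (0 < j)%N ->
  b s * (u_cand s x X)%:R * Num.min (j%:R / U) j%:R^-1 <= pay s.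
Proof.
move=> j_gt0; set c := Num.min _ _.
have J_gt0 : (0 : R) < j%:R by rewrite ltr0n.
have u_le : (u_cand s x X)%:R <= j%:R :> R.
  by rewrite ler_nat -[j]/(j.+1.-1) -card_X u_cand_le.
rewrite le_min; apply/andP; split.
  rewrite (_ : _ / U = b s * (u_cand s x X)%:R * (j%:R / U)); last by ring.
  by rewrite ler_wpM2l ?mulr_ge0 ?ler0n // ge_min lexx.
have uc_le1 : (u_cand s x X)%:R * c <= 1.
  have : c <= j%:R^-1 by rewrite ge_min lexx orbT.
  have : 0 <= c by rewrite le_min !divr_ge0 ?U_score_ge0 ?ler0n // invr_ge0 ler0n.
  have : j%:R * j%:R^-1 = 1 :> R by rewrite mulfV ?gt_eqF.
  nra.
by rewrite -mulrA ler_piMr.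
Qed.

Lemma mass_budget_step_le :
  mass (budget_step k b x X) <= mass b - Num.min j%:R (mass b / 2).
Proof.
have -> : mass (budget_step k b x X) = mass b - \sum_s pay s.
  by rewrite /mass -sumrB; apply: eq_bigr => s _; rewrite budget_stepE.
rewrite lerD2l lerN2.
have U_ge0 : 0 <= U by exact: U_score_ge0.
have mass_ge0 : 0 <= mass b by apply: sumr_ge0.
have massU := mass_mulr_le_U_score.
have pay_sum_ge0 : 0 <= \sum_s pay s by apply: sumr_ge0 => s _; apply: pay_ge0.
have [j0|j_gt0] := posnP j.
  by apply: le_trans pay_sum_ge0; rewrite j0 ge_min lexx.
have J_gt0 : (0 : R) < j%:R by rewrite ltr0n.
have [U0|U_neq0] := eqVneq U 0.
  apply: le_trans pay_sum_ge0; rewrite ge_min; apply/orP; right.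
  by move: massU; rewrite U0 mulr0; nra.
have U_gt0 : 0 < U by rewrite lt_def U_neq0.
(* The shares add up to [min j (U / j)], and [U / j >= mass b / 2]. *)
apply: le_trans (ler_sum _ (fun s _ => share_le_pay s j_gt0)).
rewrite -mulr_suml minr_pMr // mulrCA mulfV // mulr1 le_min ge_min lexx /=.
rewrite ge_min; apply/orP; right; rewrite ler_pdivlMr //.
by move: massU; rewrite /U_score; lra.
Qed.

Lemma weighted_budget_drop_le (w : {perm 'I_m} -> R) :
  (forall s, 0 <= w s <= 1) ->
  (\sum_s w s * b s) * (\sum_s w s * b s - \sum_s w s * budget_step k b x X s)
    <= 2 * \sum_s w s * b s * (u_cand s x X)%:R.
Proof.
move=> w01; set W := \sum_s w s * b s; set G := \sum_s w s * b s * _.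
have w_ge0 s : 0 <= w s by case/andP: (w01 s).
have U_ge0 : 0 <= U by exact: U_score_ge0.
have W_ge0 : 0 <= W by apply: sumr_ge0 => s _; rewrite mulr_ge0.
have G_ge0 : 0 <= G by apply: sumr_ge0 => s _; rewrite !mulr_ge0 ?ler0n.
have WU : W * j%:R <= 2 * U.
  apply: le_trans mass_mulr_le_U_score; rewrite ler_wpM2r ?ler0n //.
  by apply: ler_sum => s _; rewrite ler_piMl //; case/andP: (w01 s).
have drop : W - \sum_s w s * budget_step k b x X s <= j%:R / U * G.
  rewrite -sumrB /G mulr_sumr; apply: ler_sum => s _.
  rewrite budget_stepE mulrBr opprB addrC subrK.
  apply: le_trans (_ : w s * (j%:R * (u_cand s x X)%:R * b s / U) <= _).
    by rewrite ler_wpM2l // ge_min lexx.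
  by rewrite le_eqVlt; apply/orP; left; apply/eqP; ring.
apply: le_trans (ler_wpM2l W_ge0 drop) _.
have [U0|U_neq0] := eqVneq U 0.
  by rewrite U0 invr0 mulr0 mul0r mulr0 mulr_ge0.
have U_gt0 : 0 < U by rewrite lt_def U_neq0.
by rewrite !mulrA ler_wpM2r // ler_pdivrMr.
Qed.

End BudgetStep.

(* Bound on the total budget while [n] candidates remain: [C(n, 2)] as long as
   a step removes a full [n - 1] (needs [n >= 3]); below that only halving is
   guaranteed. *)
Definition residual_bound (R : numFieldType) (n : nat) : R :=
  if (3 <= n)%N then 'C(n, 2)%:R else if n == 2%N then 3 / 2 else 3 / 4.

Lemma bin2_le_residual_bound (R : realFieldType) (n : nat) :
  'C(n, 2)%:R <= residual_bound R n.
Proof.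
rewrite /residual_bound; case: n => [|[|[|n]]] /=; last exact: lexx.
- by rewrite bin_small //; lra.
- by rewrite bin_small //; lra.
- by rewrite binn; lra.
Qed.

Lemma residual_bound_step (R : realFieldType) (j : nat) (B : R) :
  0 <= B -> B <= residual_bound R j.+1 ->
  B - Num.min j%:R (B / 2) <= residual_bound R j.
Proof.
move=> B_ge0; rewrite lerBlDl -lerBlDr le_min /residual_bound.
case: j => [|[|[|n]]] /= B_le; apply/andP.
- by split; lra.
- by split; lra.
- by move: B_le; rewrite (_ : 'C(3, 2) = 3)%N //; split; lra.
have binS4 : 'C(n.+4, 2)%:R = n.+3%:R + 'C(n.+3, 2)%:R :> R.
  by rewrite binS bin1 natrD addrC.
have : n.+3%:R <= 'C(n.+3, 2)%:R :> R.
  by rewrite ler_nat binS bin1; have := bin_gt0 n.+2 2; rewrite /=; lia.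
by move: B_le; rewrite binS4; lra.
Qed.

Lemma sqr_telescope_le (R : realFieldType) (W : nat -> R) (n : nat) :
  (W 0%N ^+ 2 - W n ^+ 2) / 2 <= \sum_(0 <= i < n) W i * (W i - W i.+1).
Proof.
elim: n => [|n IH]; first by rewrite big_geq // subrr mul0r.
rewrite big_nat_recr //=.
(* [a (a - b) = (a^2 - b^2) / 2 + (a - b)^2 / 2] *)
have := sqr_ge0 (W n - W n.+1).
move: IH; set a := W n; set b := W n.+1; set s := \sum_(0 <= i < n) _; nra.
Qed.

Lemma u_rank_split (m : nat) (s rhd : {perm 'I_m}) :
  u_rank s rhd = (\sum_x u_cand s x (remaining rhd (rhd x)))%N.
Proof.
rewrite /u_rank card_set_sum -(pair_big xpredT xpredT
  (fun x y => (prefers s x y && prefers rhd x y : nat))) /=.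
apply: eq_bigr => x _; rewrite /u_cand card_set_in_sum [RHS]big_mkcond /=.
apply: eq_bigr => y _; rewrite !inE /prefers.
have [->|y_neq_x] := eqVneq y x; first by rewrite ltnn andbF; case: ifP.
have : rhd x != rhd y :> nat by rewrite val_eqE (inj_eq perm_inj) eq_sym.
by case: (ltngtP (rhd x) (rhd y)); rewrite ?andbT ?andbF.
Qed.

Section ProportionalSequentialBorda.

Variables (R : realType) (m : nat) (Rp : {ffun {perm 'I_m} -> R}).
Variable rhd : {perm 'I_m}.

Local Notation b := (budget Rp rhd).
Local Notation X := (remaining rhd).

Lemma budget_succ (x : 'I_m) :
  b (rhd x).+1 = budget_step (rhd x) (b (rhd x)) x (X (rhd x)).
Proof.
rewrite /=; case: pickP => [y /eqP/val_inj/perm_inj -> //|no_x].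
by have := no_x x; rewrite eqxx.
Qed.

Lemma card_remaining (k : nat) : #|X k| = (m - k)%N.
Proof.
have -> : X k = rhd @^-1: [set i : 'I_m | (k <= i)%N] by apply/setP => x; rewrite !inE.
by rewrite card_preimset ?card_geq_ord //; apply: perm_inj.
Qed.

Lemma card_remaining_at (x : 'I_m) : #|X (rhd x)| = (m - (rhd x).+1).+1.
Proof. by rewrite card_remaining; have := ltn_ord (rhd x); lia. Qed.

Lemma mem_remaining_at (x : 'I_m) : x \in X (rhd x).
Proof. by rewrite inE. Qed.

Hypothesis Rp_ge0 : forall s, 0 <= Rp s.

Lemma budget_bounds (k : nat) (s : {perm 'I_m}) :
  0 <= b k s <= Rp s * 'C(m, 2)%:R.
Proof.
elim: k s => [|k IH] s /=; first by rewrite ffunE lexx andbT mulr_ge0 ?ler0n.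
case: pickP => [x _|_]; last exact: IH.
have b_ge0 s' : 0 <= b k s' by case/andP: (IH s').
rewrite budget_step_ge0 //=; apply: le_trans (budget_step_le k x (X k) b_ge0 s) _.
by case/andP: (IH s).
Qed.

Lemma budget_ge0 (k : nat) (s : {perm 'I_m}) : 0 <= b k s.
Proof. by case/andP: (budget_bounds k s). Qed.

Hypothesis Rp_psb : PSB_outcome Rp rhd.

Lemma budget_argmax (x y : 'I_m) : y \in X (rhd x) ->
  U_score (b (rhd x)) y (X (rhd x)) <= U_score (b (rhd x)) x (X (rhd x)).
Proof. exact: Rp_psb. Qed.

Hypothesis Rp_mass : mass Rp = 1.

Lemma mass_budget_le (k : nat) : (k <= m)%N -> mass (b k) <= residual_bound R (m - k).
Proof.
elim: k => [_|k IH k_lt_m].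
  rewrite subn0 /mass /=; under eq_bigr do rewrite ffunE.
  by rewrite -mulr_suml -/(mass Rp) Rp_mass mul1r bin2_le_residual_bound.
pose x := (rhd^-1)%g (Ordinal k_lt_m).
have rhd_x : rhd x = k :> nat by rewrite permKV.
have := budget_succ x; rewrite rhd_x => ->.
apply: le_trans (mass_budget_step_le (budget_ge0 k) _ _ _) _.
- by have := card_remaining_at x; rewrite rhd_x.
- by have := budget_argmax (x := x); rewrite rhd_x.
- by have := mem_remaining_at x; rewrite rhd_x.
apply: residual_bound_step; first by apply: sumr_ge0 => s _; apply: budget_ge0.
by rewrite -subSn // subSS; apply: IH; apply: ltnW.
Qed.

Lemma mass_final_budget_le : mass (b m) <= 3 / 4.
Proof. by have := mass_budget_le (leqnn m); rewrite subnn. Qed.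

Variable w : {perm 'I_m} -> R.
Hypothesis w01 : forall s, 0 <= w s <= 1.

Local Notation W k := (\sum_s w s * b k s).

Lemma weighted_budget_sqr_drop_le :
  (W 0%N ^+ 2 - W m ^+ 2) / 2
    <= 2 * 'C(m, 2)%:R * \sum_s w s * Rp s * (u_rank s rhd)%:R.
Proof.
apply: le_trans (sqr_telescope_le (fun k => W k) m) _.
rewrite big_mkord (reindex_inj (@perm_inj _ rhd)).
have drop_le x : W (rhd x) * (W (rhd x) - W (rhd x).+1)
    <= 2 * 'C(m, 2)%:R * \sum_s w s * Rp s * (u_cand s x (X (rhd x)))%:R.
  rewrite budget_succ; apply: le_trans (weighted_budget_drop_le (budget_ge0 _)
    (card_remaining_at x) (@budget_argmax x) w01) _.
  rewrite -mulrA ler_wpM2l // mulr_sumr; apply: ler_sum => s _.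
  have /andP[w_ge0 _] := w01 s.
  rewrite !mulrA ler_wpM2r ?ler0n // [_ * w s]mulrC -mulrA ler_wpM2l // mulrC.
  by case/andP: (budget_bounds (rhd x) s).
suff -> : \sum_s w s * Rp s * (u_rank s rhd)%:R
    = \sum_x \sum_s w s * Rp s * (u_cand s x (X (rhd x)))%:R.
  by rewrite mulr_sumr; apply: ler_sum => x _; apply: drop_le.
rewrite exchange_big; apply: eq_bigr => s _ /=.
by rewrite u_rank_split natr_sum mulr_sumr.
Qed.

End ProportionalSequentialBorda.

Lemma subprofile_weights (R : realType) (m : nat) (Rp S : {ffun {perm 'I_m} -> R}) :
  is_subprofile Rp S ->
  exists2 w : {perm 'I_m} -> R, (forall s, 0 <= w s <= 1) & (forall s, S s = w s * Rp s).
Proof.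
move=> S_sub; exists (fun s => S s / Rp s) => s; have /andP[S_ge0 S_le] := S_sub s.
  have [Rp0|Rp_neq0] := eqVneq (Rp s) 0; first by rewrite Rp0 invr0 mulr0 lexx ler01.
  have Rp_gt0 : 0 < Rp s by rewrite lt_def Rp_neq0 (le_trans S_ge0).
  by rewrite divr_ge0 ?ler_pdivrMr ?mul1r // ltW.
have [Rp0|Rp_neq0] := eqVneq (Rp s) 0; last by rewrite divfK.
by apply/eqP; rewrite Rp0 mulr0 eq_le S_ge0 -Rp0 S_le.
Qed.

Lemma satisfaction_lower_bound (R : realFieldType) (C M V T : R) :
  0 <= C -> 0 < M -> 0 <= T -> 0 <= V <= 3 / 4 -> V <= C * M ->
  ((C * M) ^+ 2 - V ^+ 2) / 2 <= 2 * C * T ->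
  C * (M / 4) - 3 / 16 <= 1 / M * T.
Proof.
move=> C_ge0 M_gt0 T_ge0 /andP[V_ge0 V_le] V_le_CM sqr_drop.
rewrite div1r ler_pdivlMl //.
have : V ^+ 2 <= 3 / 4 * (C * M) by rewrite expr2 ler_pM.
have [->|C_neq0] := eqVneq C 0; first by nra.
have C_gt0 : 0 < C by rewrite lt_def C_neq0.
nra.
Qed.

Unset Implicit Arguments.
Set Strict Implicit.

Theorem mainTheorem5 (R : realType) (m : nat)
  (Rp : {ffun {perm 'I_m} -> R}) (rhd : {perm 'I_m}) :
  is_profile Rp -> PSB_outcome Rp rhd ->
  forall S : {ffun {perm 'I_m} -> R},
    is_subprofile Rp S -> 0 < mass S ->
    (1 / mass S) * (\sum_s S s * (u_rank s rhd)%:R)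
      >= ('C(m, 2))%:R * (mass S / 4) - 3 / 16.
Proof.
move=> [Rp01 Rp_mass] Rp_psb S /subprofile_weights[w w01 Sw] S_gt0.
have Rp_ge0 s : 0 <= Rp s by case/andP: (Rp01 s).
have w_ge0 s : 0 <= w s by case/andP: (w01 s).
have budget_ge0 := budget_ge0 rhd Rp_ge0.
have sqr_drop := weighted_budget_sqr_drop_le Rp_ge0 Rp_psb w01.
have W0 : \sum_s w s * budget Rp rhd 0 s = 'C(m, 2)%:R * mass S.
  by rewrite /mass mulr_sumr; apply: eq_bigr => s _; rewrite ffunE Sw; ring.
under eq_bigr do rewrite Sw.
rewrite W0 in sqr_drop; apply: satisfaction_lower_bound sqr_drop => //.
- by apply: sumr_ge0 => s _; rewrite !mulr_ge0.
- apply/andP; split; first by apply: sumr_ge0 => s _; rewrite mulr_ge0.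
  apply: le_trans (mass_final_budget_le Rp_ge0 Rp_psb Rp_mass).
  by apply: ler_sum => s _; rewrite ler_piMl //; case/andP: (w01 s).
- rewrite /mass mulr_sumr; apply: ler_sum => s _.
  rewrite Sw mulrCA ler_wpM2l // mulrC.
  by case/andP: (budget_bounds rhd Rp_ge0 m s).
Qed.
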